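(* Consider the NOMA-aided cell-free massive MIMO UE clustering problem with fixed power allocation described in the context. A clustering matrix $\mathbf X$ is an all-stable solution if there is no negative differ-cluster loop in the extended graph $D(\mathcal N^e,\varepsilon;\mathbf X)$ whose associated cluster change increases the ASR while satisfying all constraints of the clustering problem.
   Context: There are $N$ URLLC UEs and $G$ clusters; clustering matrix $\mathbf X=[x_{gn}]$ with $x_{gn}\in\{0,1\}$, $\sum_g x_{gn}=1$, and $\pi_n$ the cluster of UE $n$. With fixed powers, each UE has rate $\hat R_n(\mathbf X)=\frac{\eta}{\ln 2}(\ln(1+\bar\gamma_n)-a_nM(\bar\gamma_n))$ ($\bar\gamma_n$ its effective average SINR, $\eta,a_n>0$ constants, $M(\gamma)=\sqrt{1-(1+\gamma^{-1})^{-2}}$), and the ASR is $\sum_n\hat R_n(\mathbf X)$. The clustering problem is: maximize the ASR over $\mathbf X$ subject to $\hat R_n\ge\hat R_n^{req}$ for all $n$ and each UE belonging to exactly one cluster. Cluster rate $\omega_g(\mathbf X)=\sum_n x_{gn}(\ln(1+\bar\gamma_n)-a_nM(\bar\gamma_n))$. Notation $n\to n'$: UE $n$ is moved into the cluster of UE $n'$ and $n'$ is removed from it. For UEs $n_1,\dots,n_K$ in different clusters: they form a $K$-exchange union if $n_1\to n_2,\dots,n_{K-1}\to n_K,n_K\to n_1$ yields $\tilde{\mathbf X}$ with ASR$(\mathbf X)\le$ ASR$(\tilde{\mathbf X})$; they form a $K$-shift union if $n_1\to n_2,\dots,n_{K-2}\to n_{K-1}$ followed by adding $n_{K-1}$ to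 the cluster of $n_K$ yields $\tilde{\mathbf X}$ with ASR$(\mathbf X)\le$ ASR$(\tilde{\mathbf X})$. $\mathbf X$ is an all-stable solution if no shift union or exchange union exists with all constraints of the clustering problem satisfied. The extended weighted directed graph $D(\mathcal N^e,\varepsilon;\mathbf X)$ has as nodes all real UEs plus one virtual UE $n_g^v$ in each cluster $g$ (virtual UEs have rate $0$, receive no power, and do not take part in SIC ordering), edges only between nodes in different clusters, and weights $z_{ij}=\omega_{\pi_j}(\mathbf X)-\omega_{\pi_j}(x_{\pi_j i}=1,x_{\pi_j j}=0,\mathbf X_{-i,j})$ for $\pi_i\ne\pi_j$ (rate of cluster $\pi_j$ before minus after placing $i$ in it and removing $j$, other assignments unchanged) and $z_{ij}=\infty$ otherwise. A negative differ-cluster loop is a directed cycle with total weight less than $0$ whose nodes all lie in different clusters; its associated cluster change is $n_1\to n_2\to\cdots\to n_K\to n_1$ along the cycle. *)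

From HB Require Import structures.
From mathcomp Require Import all_boot all_order all_algebra.
From mathcomp Require Import all_classical all_reals all_analysis.
Set Implicit Arguments. Unset Strict Implicit. Unset Printing Implicit Defensive.
Import Order.TTheory GRing.Theory Num.Theory.
Local Open Scope ring_scope.

Section Defs.
Variables (R : realType) (N G : nat).

(* A clustering matrix X = [x_gn] with x_gn in {0,1} and sum_g x_gn = 1 is
   represented by the map n |-> pi_n (the unique g with x_gn = 1). *)
Definition clustering := {ffun 'I_N -> 'I_G}.

Definition members (X : clustering) (g : 'I_G) : {set 'I_N} :=
  [set n | X n == g].

Definition Mfun (gam : R) : R := Num.sqrt (1 - (1 + gam^-1) ^-2).

(* ln(1 + gamma_n) - a_n M(gamma_n), where gam X n is the effective average
   SINR of UE n under clustering X *)
Definition urate (a : 'I_N -> R) (gam : clustering -> 'I_N -> R)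
  (X : clustering) (n : 'I_N) : R :=
  ln (1 + gam X n) - a n * Mfun (gam X n).

Definition rate (eta : R) (a : 'I_N -> R) (gam : clustering -> 'I_N -> R)
  (X : clustering) (n : 'I_N) : R :=
  eta / ln 2 * urate a gam X n.

Definition ASR eta a gam (X : clustering) : R := \sum_n rate eta a gam X n.

Definition omega a gam (X : clustering) (g : 'I_G) : R :=
  \sum_(n | X n == g) urate a gam X n.

(* constraints of the clustering problem (the "exactly one cluster"
   constraint is built into the type clustering) *)
Definition feasible eta a gam (Rreq : 'I_N -> R) (X : clustering) : Prop :=
  forall n, Rreq n <= rate eta a gam X n.

(* K-exchange: n_k -> n_{k+1} (indices mod K), i.e. n_k joins the cluster
   of n_{k+1} *)
Definition exch_change (X : clustering) (ns : seq 'I_N) : clustering :=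
  [ffun n => if n \in ns then X (nth n ns ((index n ns).+1 %% size ns))
             else X n].

(* K-shift: n_1 -> n_2, ..., n_{K-2} -> n_{K-1}, then n_{K-1} added to the
   cluster of n_K: n_k joins the cluster of n_{k+1} for k = 1..K-1, n_K
   stays. *)
Definition shift_change (X : clustering) (ns : seq 'I_N) : clustering :=
  [ffun n => if (n \in ns) && (index n ns < (size ns).-1)%N
             then X (nth n ns (index n ns).+1) else X n].

Definition diff_cluster_UEs (X : clustering) (ns : seq 'I_N) : Prop :=
  (2 <= size ns)%N /\ uniq (map X ns).

Definition is_exchange_union eta a gam (X : clustering) (ns : seq 'I_N) : Prop :=
  diff_cluster_UEs X ns /\ ASR eta a gam X < ASR eta a gam (exch_change X ns).

Definition is_shift_union eta a gam (X : clustering) (ns : seq 'I_N) : Prop :=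
  diff_cluster_UEs X ns /\ ASR eta a gam X < ASR eta a gam (shift_change X ns).

Definition all_stable eta a gam Rreq (X : clustering) : Prop :=
  ~ exists ns : seq 'I_N,
      (is_exchange_union eta a gam X ns /\
         feasible eta a gam Rreq (exch_change X ns))
   \/ (is_shift_union eta a gam X ns /\
         feasible eta a gam Rreq (shift_change X ns)).

(* nodes: real UEs (inl n) and one virtual UE per cluster (inr g = n_g^v) *)
Definition node := ('I_N + 'I_G)%type.

Definition clus (X : clustering) (i : node) : 'I_G :=
  match i with inl n => X n | inr g => g end.

(* put node i into cluster g (virtual UEs are not part of the clustering
   matrix, so moving them changes nothing) *)
Definition place (X : clustering) (i : node) (g : 'I_G) : clustering :=
  match i with
  | inl n => [ffun m => if m == n then g else X m]
  | inr _ => X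
  end.

(* clustering with i placed in cluster pi_j and j removed from it
   (j is put into pi_i; only cluster pi_j matters for the weight) *)
Definition swap_nodes (X : clustering) (i j : node) : clustering :=
  place (place X j (clus X i)) i (clus X j).

Definition zw a gam (X : clustering) (i j : node) : \bar R :=
  if clus X i != clus X j then
    ((omega a gam X (clus X j) - omega a gam (swap_nodes X i j) (clus X j))%R)%:E
  else +oo%E.

(* a directed cycle c = [n_1; ...; n_K] (edges n_k -> n_{k+1}, n_K -> n_1)
   whose nodes all lie in different clusters *)
Definition differ_cluster_loop (X : clustering) (c : seq node) : Prop :=
  (2 <= size c)%N /\ uniq (map (clus X) c).

Definition loop_weight a gam (X : clustering) (c : seq node) : \bar R :=
  (\sum_(p <- zip c (rot 1 c)) zw a gam X p.1 p.2)%E.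

(* cluster change associated with the loop: n_1 -> n_2 -> ... -> n_K -> n_1,
   i.e. each real UE n_k of the loop joins the cluster of n_{k+1} (mod K) *)
Definition loop_change (X : clustering) (c : seq node) : clustering :=
  [ffun n => if inl n \in c
             then clus X (nth (inl n) c ((index (inl n) c).+1 %% size c))
             else X n].

Definition negative_differ_cluster_loop a gam (X : clustering) (c : seq node) : Prop :=
  differ_cluster_loop X c /\ (loop_weight a gam X c < 0)%E.

End Defs.

From HB Require Import structures.
From mathcomp Require Import all_boot all_order all_algebra.
From mathcomp Require Import all_classical all_reals all_analysis.
Import Order.TTheory GRing.Theory Num.Theory.
Set Implicit Arguments. Unset Strict Implicit. Unset Printing Implicit Defensive.

(* Every exchange union and every shift union of X is the cluster change of a
   differ-cluster loop of the extended graph; a shift union closes its loop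
   through the virtual UE of the cluster of n_K.  Along a loop, the edge
   entering node j weighs omega_{pi_j}(X) - omega_{pi_j}(X~), with X~ the loop
   change: since the SINRs only depend on the composition of the own cluster,
   cluster pi_j has the same members after the single swap as after the whole
   loop change.  The clusters of the loop are pairwise distinct and the others
   are untouched, so the loop weight is sum_g omega_g(X) - sum_g omega_g(X~),
   i.e. (ASR(X) - ASR(X~)) ln 2 / eta.  An ASR-increasing feasible union thus
   gives a negative differ-cluster loop with an ASR-increasing feasible change. *)

Section CyclicSuccessor.
Variable T : eqType.
Implicit Types (c : seq T) (x : T).

Lemma nth_succ_index_mod c x :
  x \in c -> nth x c ((index x c).+1 %% size c) = next c x.
Proof.
move=> xc; rewrite next_nth xc; case: c xc => [|y p] // xc.
have : index x (y :: p) <= size p by rewrite -ltnS index_mem.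
move: (index x (y :: p)) => i; rewrite leq_eqVlt => /predU1P[-> | lt_ip].
  by rewrite /= modnn /= nth_default.
by rewrite /= modn_small ?ltnS // (set_nth_default y).
Qed.

Lemma next_neq c x : uniq c -> 1 < size c -> x \in c -> next c x != x.
Proof.
move=> Uc c_gt1 /rot_to[i q Ec]; rewrite -(next_rot i Uc) Ec.
have : uniq (x :: q) by rewrite -Ec rot_uniq.
have : 1 < size (x :: q) by rewrite -Ec size_rot.
case: q {Ec} => [|y q] //= _; rewrite eqxx inE negb_or => /andP[/andP[xy _] _].
by rewrite eq_sym.
Qed.

Lemma fpath_belast (f : T -> T) x s : fpath f x s -> s = map f (belast x s).
Proof. by elim: s x => //= y s IHs x /andP[/eqP-> /IHs {1}->]. Qed.

Lemma map_next_rot1 c : uniq c -> map (next c) c = rot 1 c.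
Proof.
move=> Uc; case: c Uc => // x q Uc; rewrite rot1_cons.
by have /fpath_belast := cycle_next Uc; rewrite belast_rcons => ->.
Qed.

Lemma zip_rot1_next c : uniq c -> zip c (rot 1 c) = [seq (x, next c x) | x <- c].
Proof. by move=> Uc; rewrite -map_next_rot1 // -zip_map map_id. Qed.

End CyclicSuccessor.

Lemma map_uniq_inj_in (T1 T2 : eqType) (f : T1 -> T2) s :
  uniq (map f s) -> {in s &, injective f}.
Proof.
elim: s => //= z s IHs /andP[fz_s Us] x y; rewrite !inE.
move=> /predU1P[->|xs] /predU1P[->|ys] Efxy //.
- by case/negP: fz_s; rewrite Efxy map_f.
- by case/negP: fz_s; rewrite -Efxy map_f.
- exact: IHs.
Qed.

Section ClusterChanges.
Variables (N G : nat) (X : clustering N G).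
Implicit Types (c : seq (node N G)) (ns : seq 'I_N).

Lemma placeE (Y : clustering N G) (i : node N G) g n :
  place Y i g n = if i == inl n then g else Y n.
Proof. by case: i => [m|h] //=; rewrite ffunE (inj_eq (@inl_inj _ _)) eq_sym. Qed.

Lemma loop_changeE c n :
  loop_change X c n = if inl n \in c then clus X (next c (inl n)) else X n.
Proof. by rewrite ffunE; case: ifP => // /nth_succ_index_mod ->. Qed.

Lemma exch_change_loop ns : exch_change X ns = loop_change X (map inl ns).
Proof.
apply/ffunP => n; rewrite !ffunE (mem_map (@inl_inj _ _)).
case: ifP => // n_ns; rewrite (index_map (@inl_inj _ _)) size_map (nth_map n) //.
by rewrite ltn_mod; case: ns n_ns.
Qed.

Lemma shift_change_loop ns z : uniq (rcons ns z) ->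
  shift_change X (rcons ns z) = loop_change X (rcons (map inl ns) (inr (X z))).
Proof.
rewrite rcons_uniq => /andP[z_ns _]; apply/ffunP => n; rewrite !ffunE.
rewrite !mem_rcons !inE (mem_map (@inl_inj _ _)) -!cats1 !index_cat.
rewrite (mem_map (@inl_inj _ _)) (index_map (@inl_inj _ _)) !size_cat size_map addn1.
have [n_ns | n_ns] := boolP (n \in ns); last first.
  by rewrite /= orbF; case: eqP => // ->; rewrite eqxx addn0 ltnn.
have lt_n : index n ns < size ns by rewrite index_mem.
rewrite orbT lt_n modn_small ?ltnS // !cats1 !nth_rcons size_map.
by case: ltngtP => // lt_sn; rewrite (nth_map n).
Qed.

Lemma differ_cluster_loop_exch ns :
  diff_cluster_UEs X ns -> differ_cluster_loop X (map inl ns).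
Proof. by rewrite /differ_cluster_loop size_map -map_comp. Qed.

Lemma differ_cluster_loop_shift ns z : diff_cluster_UEs X (rcons ns z) ->
  differ_cluster_loop X (rcons (map inl ns) (inr (X z))).
Proof.
by rewrite /differ_cluster_loop /diff_cluster_UEs !map_rcons -map_comp !size_rcons size_map.
Qed.

Lemma map_uniq_clus_eq c : uniq (map (clus X) c) ->
  {in c &, forall u v, (clus X u == clus X v) = (u == v)}.
Proof. by move/map_uniq_inj_in/inj_in_eq. Qed.

Lemma members_swap_next c x : differ_cluster_loop X c -> x \in c ->
  members (swap_nodes X x (next c x)) (clus X (next c x)) =
  members (loop_change X c) (clus X (next c x)).
Proof.
move=> [c_gt1 Uc] xc; have clus_eq := map_uniq_clus_eq Uc.
have Uc' := map_uniq Uc; set j := next c x.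
have jc : j \in c by rewrite mem_next.
have /negbTE jx : j != x by exact: next_neq.
apply/setP => n; rewrite !inE loop_changeE /swap_nodes !placeE /=.
have [nc | nc] := boolP (inl n \in c); last first.
  have /negbTE-> : x != inl n by apply: contraNneq nc => <-.
  by have /negbTE-> : j != inl n by apply: contraNneq nc => <-.
rewrite clus_eq ?mem_next // (can_eq (prev_next Uc')) (eq_sym (inl n)).
have [_|_] := eqVneq x (inl n); first by rewrite eqxx.
have [_|jn] := eqVneq j (inl n); first by rewrite clus_eq // eq_sym jx.
by rewrite -[X n]/(clus X (inl n)) clus_eq // eq_sym (negbTE jn).
Qed.

Lemma members_loop_change_out c g : g \notin map (clus X) c ->
  members (loop_change X c) g = members X g.
Proof.
move=> g_c; apply/setP => n; rewrite !inE loop_changeE.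
case: ifP => // nc; transitivity false.
  by apply: contraNF g_c => /eqP <-; rewrite map_f ?mem_next.
by apply: esym; apply: contraNF g_c => /eqP <-; exact: (map_f (clus X) nc).
Qed.

End ClusterChanges.

Local Open Scope ring_scope.

Section LoopWeight.
Variables (R : realType) (N G : nat).
Variables (a : 'I_N -> R) (gam : clustering N G -> 'I_N -> R).
Hypothesis gam_local : forall (Y Y' : clustering N G) n,
  Y n = Y' n -> members Y (Y n) = members Y' (Y' n) -> gam Y n = gam Y' n.

Lemma omega_members (Y Y' : clustering N G) g :
  members Y g = members Y' g -> omega a gam Y g = omega a gam Y' g.
Proof.
move=> EYY'; have EY n : (Y n == g) = (Y' n == g).
  by move/setP: EYY' => /(_ n); rewrite !inE.
rewrite /omega (eq_bigl _ _ EY); apply: eq_bigr => n /eqP Y'n.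
have Yn : Y n = g by apply/eqP; rewrite EY Y'n.
by rewrite /urate (@gam_local Y Y' n) ?Yn ?Y'n.
Qed.

Lemma ASR_sum_omega (eta : R) (Y : clustering N G) :
  ASR eta a gam Y = eta / ln 2 * \sum_g omega a gam Y g.
Proof. by rewrite /ASR /rate -mulr_sumr (partition_big Y xpredT). Qed.

Lemma loop_weightE (X : clustering N G) (c : seq (node N G)) :
  differ_cluster_loop X c ->
  loop_weight a gam X c =
  (\sum_g omega a gam X g - \sum_g omega a gam (loop_change X c) g)%:E.
Proof.
move=> Dc; have [c_gt1 Uc] := Dc; have Uc' := map_uniq Uc.
set d := fun g => omega a gam X g - omega a gam (loop_change X c) g.
have edge x : x \in c -> zw a gam X x (next c x) = (d (clus X (next c x)))%:E.
  move=> xc; rewrite /zw (map_uniq_clus_eq Uc) ?mem_next // eq_sym next_neq //=.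
  by rewrite (omega_members (members_swap_next Dc xc)).
rewrite /loop_weight zip_rot1_next // big_map (eq_big_seq _ edge) sumEFin.
congr (_%:E); rewrite -(big_map (next c) xpredT (d \o clus X)) map_next_rot1 //.
rewrite (perm_big c) ?perm_rot // -(big_map (clus X) xpredT d) big_uniq //=.
rewrite -sumrB [RHS](bigID (mem (map (clus X) c))) /= [X in _ + X]big1 ?addr0 //.
by move=> g g_c; rewrite /d (omega_members (members_loop_change_out g_c)) subrr.
Qed.

Lemma ASR_lt_negative_loop (eta : R) (X : clustering N G) (c : seq (node N G)) :
  0 < eta -> differ_cluster_loop X c ->
  ASR eta a gam X < ASR eta a gam (loop_change X c) ->
  negative_differ_cluster_loop a gam X c.
Proof.
move=> eta_gt0 Dc; rewrite !ASR_sum_omega ltr_pM2l; last first.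
  by rewrite divr_gt0 // ln_gt0 // ltr1n.
by move=> lt_omega; split; rewrite // loop_weightE // lte_fin subr_lt0.
Qed.

End LoopWeight.

Unset Implicit Arguments.

Theorem theorem2 (R : realType) (N G : nat)
  (eta : R) (a : 'I_N -> R) (gam : clustering N G -> 'I_N -> R)
  (Rreq : 'I_N -> R) (X : clustering N G)
  (eta_gt0 : 0 < eta) (a_gt0 : forall n, 0 < a n)
  (gam_gt0 : forall Y n, 0 < gam Y n)
  (* the effective average SINR of UE n depends on the clustering only
     through the composition (and index) of the cluster of n *)
  (gam_local : forall (Y Y' : clustering N G) n,
      Y n = Y' n -> members Y (Y n) = members Y' (Y' n) -> gam Y n = gam Y' n) :
  (forall c : seq (node N G),
      negative_differ_cluster_loop a gam X c ->
      ~ (ASR eta a gam X < ASR eta a gam (loop_change X c)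
         /\ feasible eta a gam Rreq (loop_change X c))) ->
  all_stable eta a gam Rreq X.
Proof.
move=> no_improving_loop.
have no_loop c : differ_cluster_loop X c ->
    ~ (ASR eta a gam X < ASR eta a gam (loop_change X c)
       /\ feasible eta a gam Rreq (loop_change X c)).
  move=> Dc [lt_ASR feas].
  have neg_c := ASR_lt_negative_loop gam_local eta_gt0 Dc lt_ASR.
  exact: (no_improving_loop c neg_c (conj lt_ASR feas)).
move=> [ns [[[Dns lt_ASR] feas] | [[Dns lt_ASR] feas]]].
  apply: (no_loop _ (differ_cluster_loop_exch Dns)).
  by rewrite -exch_change_loop.
case/lastP: ns => [|ns z] in Dns lt_ASR feas; first by case: Dns.
have Uz : uniq (rcons ns z) by case: Dns => _ /map_uniq.
apply: (no_loop _ (differ_cluster_loop_shift Dns)).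
by rewrite -shift_change_loop.
Qed.
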